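(* Let $(c_n)_{n\in\mathbb{Z}}$ be real numbers with $\sum_{n\in\mathbb{Z}}n^2c_n^2<\infty$, and for $j\in\{0,1,2\}$ let $g_j(\theta)=\sum_{n\in\mathbb{Z}}n^jc_n^2e^{in\theta}$, $g=g_0$. Then for every $\theta\in\mathbb{R}$, \[ |g(0)g_1(\theta)-g_1(0)g(\theta)|^2\le\left(g(0)g_2(0)-g_1^2(0)\right)\left(g^2(0)-|g(\theta)|^2\right). \] *)

From Stdlib Require Import Reals ZArith.
From Coquelicot Require Import Coquelicot.
Open Scope R_scope.

Definition zsum (f : Z -> R) : R :=
  Series (fun k : nat => f (Z.of_nat k)) + Series (fun k : nat => f (- Z.of_nat (S k))%Z).

Definition zsummable (f : Z -> R) : Prop :=
  ex_series (fun k : nat => Rabs (f (Z.of_nat k))) /\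
  ex_series (fun k : nat => Rabs (f (- Z.of_nat (S k))%Z)).

(* g_j(theta) = sum_n n^j c_n^2 e^{i n theta}, with e^{ix} = cos x + i sin x. *)
Definition gj (c : Z -> R) (j : nat) (theta : R) : C :=
  (zsum (fun n => IZR n ^ j * c n ^ 2 * cos (IZR n * theta)),
   zsum (fun n => IZR n ^ j * c n ^ 2 * sin (IZR n * theta))).

(* Put w_n = c_n^2, A = g(0), B = g_1(0), D = g_2(0), G = g(theta), H = g_1(theta).
   Since sum_n w_n (A n - B) = 0,
     A (A H - B G) = sum_n w_n (A n - B) (A e^{i n theta} - G),
   and Cauchy-Schwarz for the weights w_n bounds A^2 |A H - B G|^2 by
     sum_n w_n (A n - B)^2 * sum_n w_n |A e^{i n theta} - G|^2 = A (A D - B^2) * A (A^2 - |G|^2).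
   Divide by A^2; if A = 0 then B = 0 (as B^2 <= A D) and both sides vanish.  Every series
   involved is a linear combination of the moments sum_n n^j w_n e^{i n theta}, j <= 2, which
   converge absolutely because sum_n n^2 w_n does. *)

From Stdlib Require Import Reals ZArith Lia Lra Psatz.
From Coquelicot Require Import Coquelicot.
Open Scope R_scope.

Lemma quadratic_discr_le (a b c : R) :
  0 <= a -> (forall t, 0 <= a * t ^ 2 - 2 * b * t + c) -> b ^ 2 <= a * c.
Proof.
  intros Ha Hq.
  destruct (Req_dec a 0) as [Ha0 | Ha0].
  - subst a.
    destruct (Req_dec b 0) as [Hb0 | Hb0]; [subst b; nra |].
    specialize (Hq ((c + 1) / (2 * b))).
    replace (0 * ((c + 1) / (2 * b)) ^ 2 - 2 * b * ((c + 1) / (2 * b)) + c)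
      with (-1) in Hq by (field; exact Hb0).
    lra.
  - specialize (Hq (b / a)).
    replace (a * (b / a) ^ 2 - 2 * b * (b / a) + c) with ((a * c - b ^ 2) / a) in Hq
      by (field; exact Ha0).
    assert (0 <= a * c - b ^ 2); [| lra].
    replace (a * c - b ^ 2) with (a * ((a * c - b ^ 2) / a)) by (field; exact Ha0).
    now apply Rmult_le_pos.
Qed.

Lemma ex_series_Rabs_le (a b : nat -> R) :
  (forall k, Rabs (a k) <= Rabs (b k)) ->
  ex_series (fun k => Rabs (b k)) -> ex_series (fun k => Rabs (a k)).
Proof.
  intros Hab Hb.
  apply (@ex_series_le R_AbsRing R_CompleteNormedModule _ (fun k => Rabs (b k)));
    [| exact Hb].
  intro k. change (Rabs (Rabs (a k)) <= Rabs (b k)). now rewrite Rabs_Rabsolu.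
Qed.

Lemma ex_series_Rabs_plus (a b : nat -> R) :
  ex_series (fun k => Rabs (a k)) -> ex_series (fun k => Rabs (b k)) ->
  ex_series (fun k => Rabs (a k + b k)).
Proof.
  intros Ha Hb.
  apply (@ex_series_le R_AbsRing R_CompleteNormedModule _
           (fun k => Rabs (a k) + Rabs (b k))); [| exact (ex_series_plus _ _ Ha Hb)].
  intro k. change (Rabs (Rabs (a k + b k)) <= Rabs (a k) + Rabs (b k)).
  rewrite Rabs_Rabsolu. apply Rabs_triang.
Qed.

Lemma ex_series_Rabs_scal (x : R) (a : nat -> R) :
  ex_series (fun k => Rabs (a k)) -> ex_series (fun k => Rabs (x * a k)).
Proof.
  intros Ha.
  apply (ex_series_ext (fun k => Rabs x * Rabs (a k))).
  - intro k. symmetry. apply Rabs_mult.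
  - now apply (ex_series_scal_l (Rabs x) (fun k => Rabs (a k))).
Qed.

Lemma Series_ge0 (a : nat -> R) : ex_series a -> (forall k, 0 <= a k) -> 0 <= Series a.
Proof.
  intros Ha Hpos.
  rewrite <- (Rmult_0_l (Series a)), <- Series_scal_l.
  apply Series_le; [| exact Ha].
  intro k. rewrite Rmult_0_l. split; [lra | apply Hpos].
Qed.

Lemma zsum_ext (f g : Z -> R) : (forall n, f n = g n) -> zsum f = zsum g.
Proof. intros Hfg. unfold zsum. f_equal; apply Series_ext; intro k; apply Hfg. Qed.

Lemma zsummable_ext (f g : Z -> R) : (forall n, f n = g n) -> zsummable f -> zsummable g.
Proof.
  intros Hfg [Hpos Hneg].
  split; [apply (ex_series_ext (fun k => Rabs (f (Z.of_nat k))))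
         | apply (ex_series_ext (fun k => Rabs (f (- Z.of_nat (S k))%Z)))];
    try assumption; intro k; now rewrite Hfg.
Qed.

Lemma zsummable_le (f g : Z -> R) :
  (forall n, Rabs (f n) <= Rabs (g n)) -> zsummable g -> zsummable f.
Proof.
  intros Hfg [Hpos Hneg].
  split; [apply (ex_series_Rabs_le _ (fun k => g (Z.of_nat k)))
         | apply (ex_series_Rabs_le _ (fun k => g (- Z.of_nat (S k))%Z))]; auto.
Qed.

Lemma zsummable_plus (f g : Z -> R) :
  zsummable f -> zsummable g -> zsummable (fun n => f n + g n).
Proof. intros [Fpos Fneg] [Gpos Gneg]. split; now apply ex_series_Rabs_plus. Qed.

Lemma zsummable_scal (a : R) (f : Z -> R) : zsummable f -> zsummable (fun n => a * f n).
Proof. intros [Fpos Fneg]. split; now apply ex_series_Rabs_scal. Qed.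

Lemma zsum_plus (f g : Z -> R) :
  zsummable f -> zsummable g -> zsum (fun n => f n + g n) = zsum f + zsum g.
Proof.
  intros [Fpos Fneg] [Gpos Gneg]. unfold zsum.
  rewrite (Series_plus (fun k => f (Z.of_nat k))),
    (Series_plus (fun k => f (- Z.of_nat (S k))%Z)) by (apply ex_series_Rabs; assumption).
  ring.
Qed.

Lemma zsum_scal (a : R) (f : Z -> R) : zsum (fun n => a * f n) = a * zsum f.
Proof. unfold zsum. rewrite !Series_scal_l. ring. Qed.

Lemma zsum_ge0 (f : Z -> R) : zsummable f -> (forall n, 0 <= f n) -> 0 <= zsum f.
Proof.
  intros [Fpos Fneg] Hf. unfold zsum.
  apply Rplus_le_le_0_compat; apply Series_ge0; auto using ex_series_Rabs.
Qed.

Lemma zsum_le (f g : Z -> R) :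
  zsummable f -> zsummable g -> (forall n, f n <= g n) -> zsum f <= zsum g.
Proof.
  intros Hf Hg Hfg.
  assert (Hdiff : 0 <= zsum (fun n => g n + -1 * f n)).
  { apply zsum_ge0; [now apply zsummable_plus, zsummable_scal |].
    intro n. specialize (Hfg n). lra. }
  rewrite zsum_plus, zsum_scal in Hdiff by auto using zsummable_scal.
  lra.
Qed.

Lemma zsummable_of_sq_mul (f : Z -> R) :
  zsummable (fun n => IZR n ^ 2 * f n) -> zsummable f.
Proof.
  assert (Hle : forall n : Z, n <> 0%Z -> Rabs (f n) <= Rabs (IZR n ^ 2 * f n)).
  { intros n Hn. rewrite Rabs_mult, <- RPow_abs, <- abs_IZR.
    assert (1 <= IZR (Z.abs n) ^ 2).
    { assert (1 <= IZR (Z.abs n)) by (apply IZR_le; lia). nra. }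
    pose proof (Rabs_pos (f n)). nra. }
  intros [Hpos Hneg]. split.
  - apply ex_series_incr_1.
    apply (ex_series_Rabs_le _ (fun k => IZR (Z.of_nat (S k)) ^ 2 * f (Z.of_nat (S k)))).
    + intro k. apply Hle. lia.
    + exact (proj1 (ex_series_incr_1 (fun k => Rabs (IZR (Z.of_nat k) ^ 2 * f (Z.of_nat k))))
               Hpos).
  - eapply ex_series_Rabs_le; [| exact Hneg]. intro k. apply Hle. lia.
Qed.

Section WeightedCauchySchwarz.

Variables w u v : Z -> R.
Hypothesis w_ge0 : forall n, 0 <= w n.
Hypothesis hu : zsummable (fun n => w n * u n ^ 2).
Hypothesis hv : zsummable (fun n => w n * v n ^ 2).

Lemma zsummable_weighted_mul : zsummable (fun n => w n * u n * v n).
Proof.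
  apply (zsummable_le _ (fun n => w n * u n ^ 2 + w n * v n ^ 2));
    [| now apply zsummable_plus].
  intro n.
  assert (Hsq : forall x, 0 <= w n * x ^ 2)
    by (intro; apply Rmult_le_pos; [apply w_ge0 | apply pow2_ge_0]).
  pose proof (Hsq (u n - v n)). pose proof (Hsq (u n + v n)).
  pose proof (Hsq (u n)). pose proof (Hsq (v n)).
  rewrite (Rabs_pos_eq (_ + _)) by lra.
  apply Rabs_le. split; nra.
Qed.

Lemma zsum_cauchy_schwarz :
  zsum (fun n => w n * u n * v n) ^ 2
  <= zsum (fun n => w n * u n ^ 2) * zsum (fun n => w n * v n ^ 2).
Proof.
  pose proof zsummable_weighted_mul as huv.
  apply quadratic_discr_le.
  - apply zsum_ge0; [exact hu |]. intro n. exact (Rmult_le_pos _ _ (w_ge0 n) (pow2_ge_0 _)).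
  - intro t.
    assert (Hexp : forall n, w n * (t * u n - v n) ^ 2
      = t ^ 2 * (w n * u n ^ 2) + (-2 * t * (w n * u n * v n) + w n * v n ^ 2))
      by (intro; ring).
    assert (Hsum : zsummable (fun n => w n * (t * u n - v n) ^ 2)).
    { apply (zsummable_ext _ _ (fun n => eq_sym (Hexp n))).
      auto using zsummable_plus, zsummable_scal. }
    replace (_ * t ^ 2 - _ * t + _) with (zsum (fun n => w n * (t * u n - v n) ^ 2)).
    + apply zsum_ge0; [exact Hsum |]. intro n. exact (Rmult_le_pos _ _ (w_ge0 n) (pow2_ge_0 _)).
    + rewrite (zsum_ext _ _ Hexp), !zsum_plus, !zsum_scal
        by auto using zsummable_plus, zsummable_scal.
      ring.
Qed.

End WeightedCauchySchwarz.

Lemma sq_dot_le (p q x y : R) : (p * x + q * y) ^ 2 <= (p ^ 2 + q ^ 2) * (x ^ 2 + y ^ 2).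
Proof. pose proof (pow2_ge_0 (p * y - q * x)). nra. Qed.

Lemma le_of_sq_le_mul (s m : R) : 0 <= m -> s ^ 2 <= s * m -> s <= m.
Proof. intros Hm Hs. destruct (Rle_lt_dec s m); [assumption |]. nra. Qed.

(* Real Cauchy-Schwarz applied in the direction (p, q) of the left-hand side. *)
Section WeightedCauchySchwarzComplex.

Variables w u v1 v2 : Z -> R.
Hypothesis w_ge0 : forall n, 0 <= w n.
Hypothesis hu : zsummable (fun n => w n * u n ^ 2).
Hypothesis hv : zsummable (fun n => w n * (v1 n ^ 2 + v2 n ^ 2)).

Lemma zsum_cauchy_schwarz_complex :
  zsum (fun n => w n * u n * v1 n) ^ 2 + zsum (fun n => w n * u n * v2 n) ^ 2
  <= zsum (fun n => w n * u n ^ 2) * zsum (fun n => w n * (v1 n ^ 2 + v2 n ^ 2)).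
Proof.
  set (p := zsum (fun n => w n * u n * v1 n)).
  set (q := zsum (fun n => w n * u n * v2 n)).
  set (K := zsum (fun n => w n * (v1 n ^ 2 + v2 n ^ 2))).
  assert (Hw_sq : forall n x, 0 <= w n * x ^ 2)
    by (intros; apply Rmult_le_pos; [apply w_ge0 | apply pow2_ge_0]).
  assert (zsummable (fun n => w n * v1 n ^ 2)
          /\ zsummable (fun n => w n * v2 n ^ 2)) as [hv1 hv2].
  { split; apply (zsummable_le _ (fun n => w n * (v1 n ^ 2 + v2 n ^ 2))); auto;
      intro n; pose proof (Hw_sq n (v1 n)); pose proof (Hw_sq n (v2 n));
      rewrite !Rabs_pos_eq; lra. }
  set (v n := p * v1 n + q * v2 n).
  assert (Hv_le : forall n, w n * v n ^ 2 <= (p ^ 2 + q ^ 2) * (w n * (v1 n ^ 2 + v2 n ^ 2))).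
  { intro n.
    replace (_ * (w n * _)) with (w n * ((p ^ 2 + q ^ 2) * (v1 n ^ 2 + v2 n ^ 2))) by ring.
    apply Rmult_le_compat_l; [apply w_ge0 | apply sq_dot_le]. }
  assert (hpv : zsummable (fun n => w n * v n ^ 2)).
  { apply (zsummable_le _ (fun n => (p ^ 2 + q ^ 2) * (w n * (v1 n ^ 2 + v2 n ^ 2))));
      [| now apply zsummable_scal].
    intro n. rewrite !Rabs_pos_eq; [apply Hv_le | | apply Hw_sq].
    apply Rmult_le_pos; [nra | apply Rmult_le_pos; [apply w_ge0 | nra]]. }
  assert (Hpq : p ^ 2 + q ^ 2 = zsum (fun n => w n * u n * v n)).
  { rewrite (zsum_ext _ (fun n => p * (w n * u n * v1 n) + q * (w n * u n * v2 n)))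
      by (intro; unfold v; ring).
    rewrite zsum_plus, !zsum_scal
      by auto using zsummable_scal, zsummable_weighted_mul.
    fold p q. ring. }
  assert (HK : zsum (fun n => w n * v n ^ 2) <= (p ^ 2 + q ^ 2) * K).
  { unfold K. rewrite <- zsum_scal. apply zsum_le; auto using zsummable_scal. }
  pose proof (zsum_cauchy_schwarz w u v w_ge0 hu hpv) as Hcs.
  rewrite <- Hpq in Hcs.
  assert (Huu : 0 <= zsum (fun n => w n * u n ^ 2)) by (apply zsum_ge0; auto).
  assert (0 <= K).
  { apply zsum_ge0; [exact hv |]. intro n.
    pose proof (Hw_sq n (v1 n)). pose proof (Hw_sq n (v2 n)). lra. }
  apply le_of_sq_le_mul; [now apply Rmult_le_pos |].
  eapply Rle_trans; [exact Hcs |].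
  replace ((p ^ 2 + q ^ 2) * _)
    with (zsum (fun n => w n * u n ^ 2) * ((p ^ 2 + q ^ 2) * K)) by ring.
  now apply Rmult_le_compat_l.
Qed.

End WeightedCauchySchwarzComplex.

Definition cos_moment (c : Z -> R) (j : nat) (theta : R) (n : Z) : R :=
  IZR n ^ j * c n ^ 2 * cos (IZR n * theta).

Definition sin_moment (c : Z -> R) (j : nat) (theta : R) (n : Z) : R :=
  IZR n ^ j * c n ^ 2 * sin (IZR n * theta).

Lemma gj_moments (c : Z -> R) (j : nat) (theta : R) :
  gj c j theta = (zsum (cos_moment c j theta), zsum (sin_moment c j theta)).
Proof. reflexivity. Qed.

Lemma cos_moment_at_0 (c : Z -> R) (j : nat) (n : Z) :
  cos_moment c j 0 n = IZR n ^ j * c n ^ 2.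
Proof. unfold cos_moment. rewrite Rmult_0_r, cos_0. ring. Qed.

Lemma zsum_sin_moment_at_0 (c : Z -> R) (j : nat) : zsum (sin_moment c j 0) = 0.
Proof.
  rewrite (zsum_ext _ (fun n => 0 * sin_moment c j 0 n)), zsum_scal; [ring |].
  intro n. unfold sin_moment. rewrite Rmult_0_r, sin_0. ring.
Qed.

Lemma pow_Rabs_le_1_plus_sq (x : R) (j : nat) : (j <= 2)%nat -> Rabs (x ^ j) <= 1 + x ^ 2.
Proof.
  intros Hj. pose proof (pow2_ge_0 x).
  destruct j as [| [| [| j]]]; [| | | lia]; simpl.
  - rewrite Rabs_R1. lra.
  - pose proof (pow2_ge_0 (x - 1 / 2)). pose proof (pow2_ge_0 (x + 1 / 2)).
    apply Rabs_le. split; nra.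
  - rewrite Rabs_pos_eq; nra.
Qed.

Section Moments.

Variable c : Z -> R.
Hypothesis hc : zsummable (fun n => IZR n ^ 2 * c n ^ 2).

Lemma trig_moment_summable (j : nat) (t : Z -> R) :
  (j <= 2)%nat -> (forall n, Rabs (t n) <= 1) ->
  zsummable (fun n => IZR n ^ j * c n ^ 2 * t n).
Proof.
  intros Hj Ht.
  apply (zsummable_le _ (fun n => c n ^ 2 + IZR n ^ 2 * c n ^ 2)).
  - intro n. pose proof (pow2_ge_0 (c n)). pose proof (pow2_ge_0 (IZR n)).
    rewrite (Rabs_pos_eq (_ + _)) by nra.
    rewrite !Rabs_mult, (Rabs_pos_eq (c n ^ 2)) by assumption.
    pose proof (pow_Rabs_le_1_plus_sq (IZR n) j Hj). pose proof (Ht n).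
    pose proof (Rabs_pos (t n)). pose proof (Rabs_pos (IZR n ^ j)).
    assert (Rabs (IZR n ^ j) * Rabs (t n) <= 1 + IZR n ^ 2).
    { replace (1 + IZR n ^ 2) with ((1 + IZR n ^ 2) * 1) by ring.
      apply Rmult_le_compat; assumption. }
    nra.
  - apply zsummable_plus; [now apply zsummable_of_sq_mul | exact hc].
Qed.

Lemma cos_moment_summable (j : nat) (theta : R) :
  (j <= 2)%nat -> zsummable (cos_moment c j theta).
Proof.
  intros Hj. apply trig_moment_summable; [exact Hj |]. intro n. apply Rabs_le, COS_bound.
Qed.

Lemma sin_moment_summable (j : nat) (theta : R) :
  (j <= 2)%nat -> zsummable (sin_moment c j theta).
Proof.
  intros Hj. apply trig_moment_summable; [exact Hj |]. intro n. apply Rabs_le, SIN_bound.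
Qed.

Local Hint Resolve zsummable_plus zsummable_scal cos_moment_summable sin_moment_summable : core.
Local Hint Extern 1 (_ <= _)%nat => lia : core.

Let A := zsum (cos_moment c 0 0).
Let B := zsum (cos_moment c 1 0).
Let D := zsum (cos_moment c 2 0).

Lemma moment_weight_ge0 : 0 <= A.
Proof. apply zsum_ge0; auto. intro n. rewrite cos_moment_at_0. simpl. nra. Qed.

Lemma moment_variance_ge0 : B ^ 2 <= A * D.
Proof.
  replace A with (zsum (fun n => c n ^ 2 * 1 ^ 2))
    by (apply zsum_ext; intro n; rewrite cos_moment_at_0; ring).
  replace B with (zsum (fun n => c n ^ 2 * IZR n * 1))
    by (apply zsum_ext; intro n; rewrite cos_moment_at_0; ring).
  replace D with (zsum (fun n => c n ^ 2 * IZR n ^ 2))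
    by (apply zsum_ext; intro n; rewrite cos_moment_at_0; ring).
  rewrite Rmult_comm.
  apply (zsum_cauchy_schwarz _ IZR (fun _ => 1) (fun n => pow2_ge_0 (c n))).
  - apply (zsummable_ext _ _ (fun n => Rmult_comm _ _) hc).
  - apply (zsummable_ext (cos_moment c 0 0)); auto.
    intro n. rewrite cos_moment_at_0. ring.
Qed.

Variable theta : R.
Let G1 := zsum (cos_moment c 0 theta).
Let G2 := zsum (sin_moment c 0 theta).
Let H1 := zsum (cos_moment c 1 theta).
Let H2 := zsum (sin_moment c 1 theta).

Lemma moment_cauchy_schwarz :
  (A * (A * H1 - B * G1)) ^ 2 + (A * (A * H2 - B * G2)) ^ 2
  <= A * (A * D - B ^ 2) * (A * (A ^ 2 - (G1 ^ 2 + G2 ^ 2))).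
Proof.
  set (u n := A * IZR n - B).
  set (v1 n := A * cos (IZR n * theta) - G1).
  set (v2 n := A * sin (IZR n * theta) - G2).
  assert (Euu : forall n, c n ^ 2 * u n ^ 2 = A ^ 2 * cos_moment c 2 0 n
            + (-2 * A * B * cos_moment c 1 0 n + B ^ 2 * cos_moment c 0 0 n)).
  { intro n. rewrite !cos_moment_at_0. unfold u. ring. }
  assert (Evv : forall n, c n ^ 2 * (v1 n ^ 2 + v2 n ^ 2)
            = (A ^ 2 + (G1 ^ 2 + G2 ^ 2)) * cos_moment c 0 0 n
                + (-2 * A * G1 * cos_moment c 0 theta n
                 + -2 * A * G2 * sin_moment c 0 theta n)).
  { intro n. rewrite cos_moment_at_0. unfold v1, v2, cos_moment, sin_moment.
    assert (Hpyth : sin (IZR n * theta) ^ 2 + cos (IZR n * theta) ^ 2 = 1)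
      by (rewrite <- !Rsqr_pow2; apply sin2_cos2).
    rewrite <- (Rmult_1_r (A ^ 2)), <- Hpyth. ring. }
  assert (Euv1 : forall n, c n ^ 2 * u n * v1 n
            = A ^ 2 * cos_moment c 1 theta n + (- (A * B) * cos_moment c 0 theta n
              + (- (A * G1) * cos_moment c 1 0 n + B * G1 * cos_moment c 0 0 n))).
  { intro n. rewrite !cos_moment_at_0. unfold u, v1, cos_moment. ring. }
  assert (Euv2 : forall n, c n ^ 2 * u n * v2 n
            = A ^ 2 * sin_moment c 1 theta n + (- (A * B) * sin_moment c 0 theta n
              + (- (A * G2) * cos_moment c 1 0 n + B * G2 * cos_moment c 0 0 n))).
  { intro n. rewrite !cos_moment_at_0. unfold u, v2, sin_moment. ring. }
  assert (hu : zsummable (fun n => c n ^ 2 * u n ^ 2))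
    by (apply (zsummable_ext _ _ (fun n => eq_sym (Euu n))); auto).
  assert (hv : zsummable (fun n => c n ^ 2 * (v1 n ^ 2 + v2 n ^ 2)))
    by (apply (zsummable_ext _ _ (fun n => eq_sym (Evv n))); auto).
  pose proof (zsum_cauchy_schwarz_complex _ u v1 v2 (fun n => pow2_ge_0 (c n)) hu hv)
    as Hcs.
  cbv beta in Hcs.
  rewrite (zsum_ext _ _ Euu), (zsum_ext _ _ Evv), (zsum_ext _ _ Euv1), (zsum_ext _ _ Euv2),
    !zsum_plus, !zsum_scal in Hcs by auto.
  fold A B D G1 G2 H1 H2 in Hcs.
  lra.
Qed.

Lemma moment_inequality :
  (A * H1 - B * G1) ^ 2 + (A * H2 - B * G2) ^ 2
  <= (A * D - B ^ 2) * (A ^ 2 - (G1 ^ 2 + G2 ^ 2)).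
Proof.
  pose proof moment_weight_ge0 as HA. pose proof moment_variance_ge0 as HB.
  destruct (Req_dec A 0) as [HA0 | HA0].
  - assert (HB0 : B = 0) by (rewrite HA0 in HB; nra).
    rewrite HA0, HB0. lra.
  - apply (Rmult_le_reg_l (A ^ 2)); [nra |].
    pose proof moment_cauchy_schwarz. lra.
Qed.

End Moments.

Theorem claim5p2 (c : Z -> R)
  (hc : zsummable (fun n => IZR n ^ 2 * c n ^ 2)) (theta : R) :
  Cmod (Cminus (Cmult (gj c 0 0) (gj c 1 theta)) (Cmult (gj c 1 0) (gj c 0 theta))) ^ 2
  <= Re (Cminus (Cmult (gj c 0 0) (gj c 2 0)) (Cmult (gj c 1 0) (gj c 1 0)))
     * (Re (Cmult (gj c 0 0) (gj c 0 0)) - Cmod (gj c 0 theta) ^ 2).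
Proof.
  pose proof (moment_inequality c hc theta) as Hm.
  rewrite !gj_moments, !zsum_sin_moment_at_0, !Cmod2_alt.
  unfold Cminus, Cmult, Cplus, Copp, Re, Im. cbn [fst snd].
  lra.
Qed.
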